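(* Let $\rho$ be a representation of $D^{2,2,2}$ and let $\{i,j,k\}=\{1,2,3\}$. Then: 1. $\varphi_i(\Phi^+\rho(x_i))=0$; 2. $\varphi_i(\Phi^+\rho(x_j))=\varphi_k(\Phi^+\rho(x_j))=\rho(y_iy_k)$; 3. $\varphi_i(\Phi^+\rho(y_i))=\rho(x_i(y_j+y_k))$; 4. $\varphi_i(\Phi^+\rho(y_j))=\rho(y_i(x_j+y_k))$; 5. $\varphi_i(\Phi^+\rho(I))=\rho(y_i(y_j+y_k))$; 6. $\varphi_i(\Phi^+\rho(y_jy_k))=\rho(y_i(x_j+x_k))$.
   Context: $D^{2,2,2}$ is the modular lattice generated by $x_1,y_1,x_2,y_2,x_3,y_3$ subject only to $x_i\subseteq y_i$ ($i=1,2,3$), with a greatest element $I$ adjoined. Meet is written $ab$, join $a+b$. A representation $\rho$ of $D^{2,2,2}$ in a finite-dimensional vector space $X_0$ is a lattice morphism from $D^{2,2,2}$ to the subspace lattice of $X_0$, with $\rho(I)=X_0$. Write $X_i=\rho(x_i)\subseteq Y_i=\rho(y_i)$. Put $R=Y_1\oplus Y_2\oplus Y_3$ and $X^1_0=\{(\eta_1,\eta_2,\eta_3)\in R:\sum\eta_i=0\}$. Let $G'_i\subseteq R$ be the triples whose $i$-th coordinate lies in $X_i$, and let $H'_i\subseteq R$ be the triples whose $i$-th coordinate is $0$. $\Phi^+\rho$ is the representation of $D^{2,2,2}$ in $X^1_0$ with $\Phi^+\rho(y_i)=G'_i\cap X^1_0$, $\Phi^+\rho(x_i)=H'_i\cap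 X^1_0$, $\Phi^+\rho(I)=X^1_0$. The elementary map $\varphi_i:X^1_0\to X_0$ is $(\eta_1,\eta_2,\eta_3)\mapsto\eta_i$; $\varphi_i(S)$ denotes the image of a subspace $S$. *)

From HB Require Import structures.
From mathcomp Require Import all_boot all_algebra.
Set Implicit Arguments. Unset Strict Implicit. Unset Printing Implicit Defensive.
Import GRing.Theory.
Local Open Scope ring_scope.

(* Triples (eta_1, eta_2, eta_3) are elements of V * V * V, a vectType
   (the canonical product vector space), i.e. V^3 = X_0 ^3.               *)
Section D222.
Variables (K : fieldType) (V : vectType K).

Notation V3 := ((V * V) * V)%type.

(* the i-th coordinate of a triple, i : 'I_3 (0,1,2 stand for 1,2,3) *)
Definition coord3 (i : 'I_3) (t : V3) : V :=
  if val i == 0%N then t.1.1 else if val i == 1%N then t.1.2 else t.2.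

Definition phi (i : 'I_3) : 'Hom(V3, V) := linfun (coord3 i).

Definition sum3 : 'Hom(V3, V) := linfun (fun t : V3 => t.1.1 + t.1.2 + t.2).

(* R = Y_1 (+) Y_2 (+) Y_3 as a subspace of V^3 *)
Definition Rsp (Y : 'I_3 -> {vspace V}) : {vspace V3} :=
  (\bigcap_(i < 3) (phi i @^-1: Y i))%VS.

Definition X01 (Y : 'I_3 -> {vspace V}) : {vspace V3} :=
  (Rsp Y :&: lker sum3)%VS.

Definition G' (X Y : 'I_3 -> {vspace V}) (i : 'I_3) : {vspace V3} :=
  (Rsp Y :&: (phi i @^-1: X i))%VS.

Definition H' (Y : 'I_3 -> {vspace V}) (i : 'I_3) : {vspace V3} :=
  (Rsp Y :&: lker (phi i))%VS.

Definition PhiPlus_y (X Y : 'I_3 -> {vspace V}) (i : 'I_3) : {vspace V3} :=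
  (G' X Y i :&: X01 Y)%VS.
Definition PhiPlus_x (Y : 'I_3 -> {vspace V}) (i : 'I_3) : {vspace V3} :=
  (H' Y i :&: X01 Y)%VS.
Definition PhiPlus_I (Y : 'I_3 -> {vspace V}) : {vspace V3} := X01 Y.

End D222.

Arguments coord3 {K V}.
Arguments phi {K V}.
Arguments sum3 {K V}.
Arguments Rsp {K V}.
Arguments X01 {K V}.
Arguments G' {K V}.
Arguments H' {K V}.
Arguments PhiPlus_y {K V}.
Arguments PhiPlus_x {K V}.
Arguments PhiPlus_I {K V}.

From HB Require Import structures.
From mathcomp Require Import all_boot all_algebra.
Set Implicit Arguments. Unset Strict Implicit.
Import GRing.Theory.
Local Open Scope ring_scope.

(* Write X_0^1(Z) for the triples with i-th coordinate in Z_i summing to 0.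
   Restricting one coordinate of X_0^1(Y) to a subspace A of Y_l gives
   X_0^1 of Y with Y_l replaced by A, so every space in the theorem is some
   X_0^1(Z), and it suffices that phi_i maps X_0^1(Z) onto Z_i (Z_j + Z_k):
   if w = u + v with w in Z_i, u in Z_j, v in Z_k, then w is the i-th
   coordinate of the triple with coordinates w, -u, -v. *)

Lemma ord3_eq_third (i j k : 'I_3) : i != j -> i != k -> j != k ->
  forall l, (l == k) = (l != i) && (l != j).
Proof.
by case: i => [[|[|[|?]]] ?] //; case: j => [[|[|[|?]]] ?] //;
   case: k => [[|[|[|?]]] ?] // _ _ _ [[|[|[|?]]] ?].
Qed.

Lemma sum_ord3 (M : nmodType) (F : 'I_3 -> M) (i j k : 'I_3) :
  i != j -> i != k -> j != k -> \sum_(l < 3) F l = F i + F j + F k.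
Proof.
move=> hij hik hjk; rewrite (bigD1 i) // (bigD1 j) 1?eq_sym //= addrA.
by rewrite (big_pred1 k) // => l; rewrite /= (ord3_eq_third hij hik hjk) andbC.
Qed.

Definition sum_coord3 (K : fieldType) (V : vectType K) (t : (V * V) * V) : V :=
  t.1.1 + t.1.2 + t.2.

Definition triple (K : fieldType) (V : vectType K) (F : 'I_3 -> V) :
  (V * V) * V := ((F ord0, F (inord 1)), F (inord 2)).

Lemma coord3_is_linear (K : fieldType) (V : vectType K) (l : 'I_3) :
  linear (coord3 l : (V * V) * V -> V).
Proof. by move=> a x y; rewrite /coord3; case: ifP => //; case: ifP. Qed.

Lemma sum_coord3_is_linear (K : fieldType) (V : vectType K) :
  linear (@sum_coord3 K V).
Proof.
move=> a x y; rewrite /sum_coord3 /= !scalerDr [RHS]addrACA.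
by rewrite (addrACA (a *: x.1.1)).
Qed.

HB.instance Definition _ (K : fieldType) (V : vectType K) (l : 'I_3) :=
  GRing.isLinear.Build K _ _ _ (coord3 l) (@coord3_is_linear K V l).
HB.instance Definition _ (K : fieldType) (V : vectType K) :=
  GRing.isLinear.Build K _ _ _ (@sum_coord3 K V) (@sum_coord3_is_linear K V).

Section PhiPlus.
Variables (K : fieldType) (V : vectType K).
Implicit Types (Z : 'I_3 -> {vspace V}) (t : (V * V) * V).

Lemma phiE l t : phi l t = coord3 l t.
Proof. exact: lfunE. Qed.

Lemma coord3_triple (F : 'I_3 -> V) l : coord3 l (triple F) = F l.
Proof.
by case: l => [[|[|[|?]]] ?] //; rewrite /triple /coord3 /=; congr F;
   apply: val_inj; rewrite /= ?inordK.
Qed.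

Lemma sum3E t : sum3 t = \sum_(l < 3) coord3 l t.
Proof.
by rewrite (lfunE (@sum_coord3 K V)) !big_ord_recl big_ord0 addr0 addrA.
Qed.

Lemma memX01 Z t :
  (t \in X01 Z) <->
  (forall l, coord3 l t \in Z l) /\ \sum_(l < 3) coord3 l t = 0.
Proof.
rewrite /X01 memv_cap memv_ker sum3E /Rsp memvE; split.
  case/andP => /subv_bigcapP inZ /eqP ->; split=> // l.
  by rewrite -phiE memv_preim memvE inZ.
case=> inZ ->; rewrite eqxx andbT; apply/subv_bigcapP => l _.
by rewrite -memvE -memv_preim phiE.
Qed.

Lemma X01_cap_preim Z l A : (A <= Z l)%VS ->
  (X01 Z :&: phi l @^-1: A)%VS = X01 [eta Z with l |-> A].
Proof.
move=> sAZ; apply/vspaceP => t; rewrite memv_cap -memv_preim phiE.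
apply/idP/idP => [/andP[/memX01[inZ sum0] inA] | /memX01[inZA sum0]].
  by apply/memX01; split=> // m /=; case: eqP => [-> | _].
have inA := inZA l; rewrite /= eqxx in inA.
rewrite inA andbT; apply/memX01; split=> // m.
by have := inZA m => /=; case: eqP => [-> /(subvP sAZ) | _].
Qed.

Section Image.
Variables (i j k : 'I_3) (hij : i != j) (hik : i != k) (hjk : j != k).

Lemma phi_X01 Z : (phi i @: X01 Z)%VS = (Z i :&: (Z j + Z k))%VS.
Proof.
apply/vspaceP => w; apply/idP/idP.
  case/memv_imgP => t /memX01[inZ]; rewrite (sum_ord3 _ hij hik hjk) => sum0 ->.
  rewrite memv_cap phiE inZ /=.
  have -> : coord3 i t = - (coord3 j t + coord3 k t).
    by apply/eqP; rewrite -addr_eq0 addrA sum0.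
  by rewrite memvN memv_add.
case/memv_capP => inZi /memv_addP[u inZj [v inZk defw]].
pose F := [eta (fun=> - v) with i |-> w, j |-> - u].
have Fj : F j = - u by rewrite /= eq_sym (negbTE hij) eqxx.
have Fk : F k = - v by rewrite /= eq_sym (negbTE hik) eq_sym (negbTE hjk).
apply/memv_imgP; exists (triple F); last by rewrite phiE coord3_triple /= eqxx.
apply/memX01; split=> [l | ]; last first.
  rewrite (sum_ord3 _ hij hik hjk) !coord3_triple Fj Fk /= eqxx defw.
  by rewrite addrAC addrK subrr.
rewrite coord3_triple; have [-> | nli] := eqVneq l i; first by rewrite /= eqxx.
have [-> | nlj] := eqVneq l j; first by rewrite Fj memvN.
have -> : l = k by apply/eqP; rewrite (ord3_eq_third hij hik hjk) nli nlj.
by rewrite Fk memvN.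
Qed.

End Image.

Variables (X Y : 'I_3 -> {vspace V}) (sXY : forall l, (X l <= Y l)%VS).

Lemma PhiPlus_y_preim l : PhiPlus_y X Y l = (X01 Y :&: phi l @^-1: X l)%VS.
Proof.
apply/vspaceP => t; rewrite /PhiPlus_y /G' /X01 !memv_cap.
by case: (t \in Rsp Y); rewrite //= andbC.
Qed.

Lemma PhiPlus_yE l : PhiPlus_y X Y l = X01 [eta Y with l |-> X l].
Proof. by rewrite PhiPlus_y_preim X01_cap_preim. Qed.

Lemma PhiPlus_xE l : PhiPlus_x Y l = X01 [eta Y with l |-> 0%VS].
Proof.
rewrite -X01_cap_preim ?sub0v //; apply/vspaceP => t.
rewrite /PhiPlus_x /H' /X01 !memv_cap memv_ker -memv_preim memv0.
by case: (t \in Rsp Y); rewrite //= andbC.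
Qed.

Lemma PhiPlus_y_capE j k : j != k ->
  (PhiPlus_y X Y j :&: PhiPlus_y X Y k)%VS
    = X01 [eta [eta Y with j |-> X j] with k |-> X k].
Proof.
move=> hjk; rewrite -X01_cap_preim /=; last by rewrite eq_sym (negbTE hjk).
rewrite -PhiPlus_yE !PhiPlus_y_preim; apply/vspaceP => t; rewrite !memv_cap.
by case: (t \in Rsp Y) (t \in lker sum3) (t \in (phi j @^-1: X j)%VS)
   => [] [] [].
Qed.

End PhiPlus.

Theorem mainTheorem4 (K : fieldType) (V : vectType K)
    (X Y : 'I_3 -> {vspace V})
    (hXY : forall i, (X i <= Y i)%VS)
    (i j k : 'I_3) (hij : i != j) (hik : i != k) (hjk : j != k) :
  ((phi i @: PhiPlus_x Y i)%VS = 0%VS) /\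
  ((phi i @: PhiPlus_x Y j)%VS = (Y i :&: Y k)%VS
     /\ (phi k @: PhiPlus_x Y j)%VS = (Y i :&: Y k)%VS) /\
  ((phi i @: PhiPlus_y X Y i)%VS = (X i :&: (Y j + Y k))%VS) /\
  ((phi i @: PhiPlus_y X Y j)%VS = (Y i :&: (X j + Y k))%VS) /\
  ((phi i @: PhiPlus_I Y)%VS = (Y i :&: (Y j + Y k))%VS) /\
  ((phi i @: (PhiPlus_y X Y j :&: PhiPlus_y X Y k))%VS
     = (Y i :&: (X j + X k))%VS).
Proof.
have [hji hki hkj] : [/\ j != i, k != i & k != j] by split; rewrite eq_sym.
rewrite PhiPlus_y_capE // !PhiPlus_xE !PhiPlus_yE // /PhiPlus_I.
rewrite !(phi_X01 hij hik hjk) (phi_X01 hkj hki hji) /=.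
rewrite !eqxx !(negbTE hij, negbTE hik, negbTE hjk).
rewrite !(negbTE hji, negbTE hki, negbTE hkj).
by rewrite cap0v !add0v (capvC (Y k)).
Qed.
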